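(* Let $G$ be a finite simple graph and let $\overrightarrow{G}$ be the directed graph obtained by replacing every edge $xy$ of $G$ by the two directed edges $\overrightarrow{xy}$ and $\overrightarrow{yx}$. Let $\mathrm{m}_G=|V(G)|-r(G)-1$. If $G$ has a complete $r$-source, then the $\mathrm{m}_G$-skeleton $\Delta^{(\mathrm{m}_G)}(\overrightarrow{G})$ of $\Delta(\overrightarrow{G})$ is shellable.
   Context: For a finite directed graph $D$, the complex of directed trees $\Delta(D)$ has the directed edges of $D$ as vertices, and its faces are the edge sets of directed forests in $D$ (vertex-disjoint unions of rooted directed trees; equivalently, edge sets in which every vertex has in-degree at most $1$ and there is no directed cycle). The $k$-skeleton $\Delta^{(k)}$ consists of all faces of dimension at most $k$. $N(v)$ is the neighbour set of $v$ in $G$. A set $A\subseteq V(G)$ is strongly independent if it is independent and $N(u)\cap N(v)=\emptyset$ for distinct $u,v\in A$; $r(G)$ is the maximum size of a strongly independent set (and $\mathrm{m}_G$ is the largest $k$ for which the $k$-skeleton of $\Delta(\overrightarrow{G})$ is pure). An inclusion-maximal strongly independent set $A=\{x_1,\ldots,x_r\}$ is a complete $r$-source if $V(G)=A\cup N(x_1)\cup\cdots\cup N(x_r)$. A pure simplicial complex is shellable if its facets admit a linear order $F_1,\ldots,F_k$ such that for all $i<j$ there exist $l<j$ and a vertex $v\in F_j$ with $F_i\cap F_j\subseteq F_l\cap F_j=F_j\setminus\{v\}$. *)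

From mathcomp Require Import all_boot all_order all_algebra.
Set Implicit Arguments. Unset Strict Implicit. Unset Printing Implicit Defensive.

Section Defs.
Variable T : finType.
Variable e : rel T.

Definition simple_graph := symmetric e /\ irreflexive e.

Definition nbhd (v : T) : {set T} := [set u | e v u].

(* directed edges of the doubled digraph G->: both orientations of each edge *)
Definition arcs : {set T * T} := [set p | e p.1 p.2].

Definition arc_rel (F : {set T * T}) : rel T := fun x y => (x, y) \in F.

Definition directed_forest (F : {set T * T}) : bool :=
  [&& F \subset arcs,
      [forall y : T, #|[set x | (x, y) \in F]| <= 1]
    & [forall p in F, ~~ connect (arc_rel F) p.2 p.1]].

Definition dtree_complex : {set {set T * T}} := [set F | directed_forest F].

Definition strongly_indep (A : {set T}) : bool :=
  [forall u in A, forall v in A, ~~ e u v] &&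
  [forall u in A, forall v in A, (u != v) ==> [disjoint nbhd u & nbhd v]].

Definition rG : nat := \max_(A : {set T} | strongly_indep A) #|A|.

Definition mG : int := (#|T|%:Z - (rG)%:Z - 1)%R.

Definition complete_source (A : {set T}) : bool :=
  [&& strongly_indep A,
      [forall B : {set T}, (A \proper B) ==> ~~ strongly_indep B]
    & A :|: (\bigcup_(x in A) nbhd x) == [set: T]].

End Defs.

Section Complexes.
Variable V : finType.
Implicit Types (K : {set {set V}}) (F : {set V}).

Definition skeleton (k : int) K : {set {set V}} :=
  [set F in K | ((#|F|%:Z - 1)%R <= k)%R].

Definition facets K : {set {set V}} :=
  [set F in K | [forall G in K, (F \subset G) ==> (G == F)]].

Definition pure K : Prop :=
  forall F G, F \in facets K -> G \in facets K -> #|F| = #|G|.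

Definition shellable K : Prop :=
  pure K /\
  exists s : seq {set V},
    [/\ uniq s,
        (forall F, (F \in s) = (F \in facets K)) &
        forall i j, i < j -> j < size s ->
          exists l, l < j /\ exists v, v \in nth set0 s j /\
            (nth set0 s i :&: nth set0 s j \subset nth set0 s l :&: nth set0 s j)
            /\ nth set0 s l :&: nth set0 s j = nth set0 s j :\ v].
End Complexes.

From mathcomp Require Import all_boot all_order all_algebra.
From mathcomp Require Import zify.
Set Implicit Arguments. Unset Strict Implicit. Unset Printing Implicit Defensive.

(* Let A be the complete source and S the set of arcs leaving A. Every vertex
   lies in the closed neighbourhood of some vertex of A, so r(G) = |A|, and a
   directed forest with fewer than |V| - |A| arcs has two roots in the closed
   neighbourhood of the same x in A, one of which can be hung from x by an arc
   of S. Hence the facets of the m_G-skeleton are the forests with |V| - |A|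
   arcs. Order them by the number of arcs outside S, then by a binary weight
   of the arcs of S they miss. For facets Fi before Fj there is an exchange
   Fj - a + b, with a not in Fi, that is a facet earlier than Fj: remove an
   arc of Fj outside S missing from Fi and re-extend by an arc of S, or, if
   there is none, trade an arc of Fj for the heaviest arc of S in Fi but not
   in Fj. *)

Section ArcSets.
Variable T : finType.
Implicit Types (F : {set T * T}).

Definition indeg_le1 F := forall x x' y, (x, y) \in F -> (x', y) \in F -> x = x'.

Lemma path_indeg_le1_chain F u w p q : indeg_le1 F ->
  path (arc_rel F) u p -> path (arc_rel F) w q -> last u p = last w q ->
  connect (arc_rel F) u w || connect (arc_rel F) w u.
Proof.
move=> F1; elim/last_ind: p q => [|p y IHp] q up.
  by move=> wq /= ->; apply/orP; right; apply/connectP; exists q.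
case/lastP: q => [|q z] wq.
  by move=> /= <-; apply/orP; left; apply/connectP; exists (rcons p y).
move: up wq; rewrite !rcons_path !last_rcons => /andP[up py] /andP[wq qz] yz.
subst z; apply: IHp wq _ => //; exact: F1 py qz.
Qed.

Lemma connect_indeg_le1_chain F u w x : indeg_le1 F ->
  connect (arc_rel F) u x -> connect (arc_rel F) w x ->
  connect (arc_rel F) u w || connect (arc_rel F) w u.
Proof.
move=> F1 /connectP[p up ->] /connectP[q wq qx].
exact: path_indeg_le1_chain F1 up wq qx.
Qed.

Lemma path_indeg_le1_uniq F u p q : indeg_le1 F ->
  path (arc_rel F) u p -> path (arc_rel F) u q -> last u p = last u q ->
  uniq (u :: p) -> uniq (u :: q) -> p = q.
Proof.
move=> F1; elim/last_ind: p q => [|p y IHp] q up.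
  case/lastP: q => [//|q z] _ /=; rewrite last_rcons => -> _.
  by rewrite mem_rcons mem_head.
case/lastP: q => [|q z] uq.
  rewrite /= last_rcons => -> /=; by rewrite mem_rcons mem_head.
move: up uq; rewrite !rcons_path !last_rcons => /andP[up py] /andP[uq qz] yz.
subst z; rewrite -!rcons_cons !rcons_uniq => /andP[_ Up] /andP[_ Uq].
by rewrite (IHp q up uq (F1 _ _ _ py qz) Up Uq).
Qed.

Lemma connect_uniq_path (r : rel T) u x : connect r u x ->
  exists p, [/\ path r u p, uniq (u :: p) & last u p = x].
Proof. by case/connectP=> p /shortenP[p' ? ? _] ->; exists p'. Qed.

(* The path from u to x in F is unique, so it avoids every arc of F outside F'. *)
Lemma connect_avoid F F' u x : indeg_le1 F -> ~~ (F \subset F') ->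
  (forall a, a \in F :\: F' -> connect (arc_rel (F :\ a)) u x) ->
  connect (arc_rel F') u x.
Proof.
move=> F1 /subsetPn[a0 a0F a0F'] avoid.
have subF a : subrel (arc_rel (F :\ a)) (arc_rel F).
  by move=> y z; rewrite /arc_rel inE => /andP[].
have a0D : a0 \in F :\: F' by rewrite inE a0F' a0F.
have [p [up Up px]] := connect_uniq_path (avoid a0 a0D).
have upF := sub_path (subF a0) up.
apply/connectP; exists p => //; apply/(pathP u) => i ip.
rewrite /arc_rel; set st := (_, _); apply/negPn/negP => stF'.
have stD : st \in F :\: F' by rewrite inE stF'; exact: (pathP u upF).
have [q [uq Uq qx]] := connect_uniq_path (avoid st stD).
have pq := path_indeg_le1_uniq F1 (sub_path (subF st) uq) upF (etrans qx (esym px)) Uq Up.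
by move: uq; rewrite pq => /(pathP u)/(_ i ip); rewrite /arc_rel -/st !inE eqxx.
Qed.

Definition roots F : {set T} := [set v | [forall x, (x, v) \notin F]].

Lemma rootsS F F' : F' \subset F -> roots F \subset roots F'.
Proof.
move=> /subsetP sF'F; apply/subsetP => v; rewrite !inE => /forallP rv.
by apply/forallP => x; apply: contra (rv x); apply: sF'F.
Qed.

Lemma connect_to_root F u z : z \in roots F -> connect (arc_rel F) u z -> u = z.
Proof.
rewrite inE => /forallP rz /connectP[p]; case/lastP: p => [//|p y].
rewrite rcons_path last_rcons => /andP[_ py] zy.
by move: (rz (last u p)); rewrite zy -/(arc_rel F _ _) py.
Qed.

Lemma roots_connect_eq F z1 z2 x : indeg_le1 F -> z1 \in roots F -> z2 \in roots F ->
  connect (arc_rel F) z1 x -> connect (arc_rel F) z2 x -> z1 = z2.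
Proof.
move=> F1 z1r z2r c1 c2.
case/orP: (connect_indeg_le1_chain F1 c1 c2) => [/(connect_to_root z2r)//|].
by move/(connect_to_root z1r).
Qed.

(* Heads of arcs are the non-roots, and distinct arcs have distinct heads. *)
Lemma card_roots F : indeg_le1 F -> #|roots F| + #|F| = #|T|.
Proof.
move=> F1; have heads : [set p.2 | p in F] = ~: roots F.
  apply/setP => v; rewrite !inE negb_forall; apply/imsetP/existsP.
    by case=> [[x y] pF ->]; exists x; rewrite negbK.
  by case=> x; rewrite negbK => xv; exists (x, v).
have inj : {in F &, injective snd}.
  by move=> [x1 y1] [x2 y2] /= p1 p2 E; subst y2; rewrite (F1 _ _ _ p1 p2).
by rewrite -(card_in_imset inj) heads cardsC.
Qed.

Lemma root_notin F p : p.2 \in roots F -> p \notin F.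
Proof. by case: p => x y; rewrite inE => /forallP. Qed.

Lemma connect_setU1 F w z u v : connect (arc_rel ((w, z) |: F)) u v ->
  connect (arc_rel F) u v \/ (connect (arc_rel F) u w /\ connect (arc_rel F) z v).
Proof.
case/connectP=> p up ->; elim: p u up => [|y p IH] u /=; first by left.
rewrite {1}/arc_rel in_setU1 => /andP[/orP[/eqP[-> ->]|uy] /IH].
  by case=> [|[_]] c; right.
case=> [c|[c1 c2]]; [left|right; split=> //]; exact: connect_trans (connect1 uy) _.
Qed.

End ArcSets.

Section DirectedForests.
Variable T : finType.
Variable e : rel T.
Implicit Types (F : {set T * T}).

Lemma directed_forest_indeg F : directed_forest e F -> indeg_le1 F.
Proof.
case/and3P=> _ /forallP indeg _ x x' y xy x'y.
by move/card_le1_eqP: (indeg y) => /(_ x x'); rewrite !inE => /(_ xy x'y).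
Qed.

Lemma directed_forest_arc F p : directed_forest e F -> p \in F -> e p.1 p.2.
Proof. by case/and3P=> /subsetP sFarcs _ _ /sFarcs; rewrite inE. Qed.

Lemma directed_forest_acyclic F p : directed_forest e F -> p \in F ->
  ~~ connect (arc_rel F) p.2 p.1.
Proof. by case/and3P=> _ _ /forall_inP; apply. Qed.

Lemma directed_forest_subset F F' : F' \subset F -> directed_forest e F ->
  directed_forest e F'.
Proof.
move=> sF'F /and3P[sFarcs /forallP indeg /forall_inP acyc]; apply/and3P; split.
- exact: subset_trans sFarcs.
- apply/forallP => y; apply: leq_trans (indeg y); apply: subset_leq_card.
  by apply/subsetP => x; rewrite !inE; apply: (subsetP sF'F).
- apply/forall_inP => p pF'; apply: contra (acyc p (subsetP sF'F p pF')).
  by apply: connect_sub => x y xy; apply/connect1/(subsetP sF'F).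
Qed.

Lemma directed_forest_setU1 F w z : directed_forest e F -> e w z ->
  z \in roots F -> ~~ connect (arc_rel F) z w -> directed_forest e ((w, z) |: F).
Proof.
move=> HF ewz zr nczw; have zF x : (x, z) \notin F by move: zr; rewrite inE => /forallP.
case/and3P: HF => sFarcs /forallP indeg /forall_inP acyc; apply/and3P; split.
- by rewrite subUset sub1set inE ewz.
- apply/forallP => y; have [->|yz] := eqVneq y z.
    apply/card_le1_eqP => x1 x2; rewrite !inE (negbTE (zF x1)) (negbTE (zF x2)) !orbF.
    by move=> /eqP[->] /eqP[->].
  apply: leq_trans (indeg y); apply: subset_leq_card; apply/subsetP => x.
  by rewrite !inE xpair_eqE (negbTE yz) andbF.
- apply/forall_inP => p; rewrite in_setU1 => /orP[/eqP-> /=|pF].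
    by apply/negP => /connect_setU1[|[]]; rewrite (negbTE nczw).
  apply/negP => /connect_setU1[c|[c1 c2]]; first by move/negP: (acyc p pF).
  move/negP: nczw; apply; apply: connect_trans c2 (connect_trans _ c1).
  by apply: connect1; rewrite /arc_rel -surjective_pairing.
Qed.

End DirectedForests.

Section BinaryWeight.
Variable P : finType.
Implicit Types (X Y : {set P}).

Definition bin_weight X := \sum_(p in X) 2 ^ enum_rank p.

Lemma bin_weight_lt m X : {in X, forall p, enum_rank p < m} -> bin_weight X < 2 ^ m.
Proof.
elim: m X => [|m IH] X Xm.
  rewrite (_ : X = set0) ?/bin_weight ?big_set0 //.
  by apply/setP => p; rewrite inE; apply/negP => /Xm.
set top := [set p : P | nat_of_ord (enum_rank p) == m].
rewrite /bin_weight (big_setID top) /= expnS mul2n -addnn -addnS; apply: leq_add; last first.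
  by apply: IH => p; rewrite !inE => /andP[pm /Xm]; rewrite ltnS leq_eqVlt (negbTE pm).
have top1 : #|X :&: top| <= 1.
  apply/card_le1_eqP => p q; rewrite !inE => /andP[_ /eqP pm] /andP[_ /eqP qm].
  by apply/enum_rank_inj/val_inj; rewrite /= pm qm.
rewrite (eq_bigr (fun _ => 2 ^ m)); last by move=> p; rewrite !inE => /andP[_ /eqP ->].
by rewrite sum_nat_const -[leqRHS]mul1n leq_mul2r top1 orbT.
Qed.

Lemma bin_weight_lt_card X : bin_weight X < 2 ^ #|P|.
Proof. by apply: bin_weight_lt => p _; apply: ltn_ord. Qed.

(* Binary weights compare like the largest-ranked element of the symmetric difference. *)
Lemma bin_weight_dominant X Y : X != Y -> bin_weight X <= bin_weight Y ->
  exists2 b, b \in Y :\: X & {in X :\: Y, forall a, enum_rank a < enum_rank b}.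
Proof.
move=> XY leXY; set D := (X :\: Y) :|: (Y :\: X).
have [p0 p0D] : exists p0, p0 \in D.
  apply/set0Pn; apply: contraNneq XY => D0; apply/eqP/setP => p.
  by move/setP/(_ p): D0; rewrite !inE; case: (p \in X); case: (p \in Y).
have [b bD bmax] := arg_maxnP (fun p => nat_of_ord (enum_rank p)) p0D.
have lt_b a : a \in D -> a != b -> enum_rank a < enum_rank b.
  move=> aD ab; have le_ab : enum_rank a <= enum_rank b := bmax a aD.
  rewrite ltn_neqAle le_ab andbT.
  by apply: contra ab => /eqP/val_inj/enum_rank_inj ->.
have notin_b (Z W : {set P}) a : b \in Z :\: W -> a \in W :\: Z -> a != b.
  by move=> bZ; apply: contraTneq => ->; move: bZ; rewrite !inE => /andP[/negbTE -> ->].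
have : b \in D := bD; rewrite in_setU => /orP[bXY|bYX]; last first.
  by exists b => // a aXY; apply: lt_b (notin_b _ _ _ bYX aXY); rewrite in_setU aXY.
move: leXY; rewrite leqNgt /bin_weight (big_setID (A := X) Y) (big_setID (A := Y) X) /=.
rewrite setIC ltn_add2l.
rewrite (bigD1 b bXY) /= ltn_addr //; apply: bin_weight_lt => a aYX.
by apply: lt_b (notin_b _ _ _ bXY aYX); rewrite in_setU aYX orbT.
Qed.

Lemma bin_weight_swap a b Y : b \in Y -> a \notin Y -> enum_rank a < enum_rank b ->
  bin_weight (a |: Y :\ b) < bin_weight Y.
Proof.
move=> bY aY ab; rewrite /bin_weight big_setU1 /=; last by rewrite in_setD1 (negbTE aY) andbF.
by rewrite [ltnRHS](big_setD1 b bY) /= ltn_add2r ltn_exp2l.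
Qed.

End BinaryWeight.

Section Shelling.
Variable V : finType.
Implicit Types (K : {set {set V}}) (F : {set V}).

Lemma setU1_setD1_I F a b : b \notin F -> (b |: F :\ a) :&: F = F :\ a.
Proof.
move=> bF; apply/setP => p; rewrite !inE; case: eqVneq => [->|_] /=.
  by rewrite (negbTE bF) andbF.
by rewrite -andbA andbb.
Qed.

(* Order the facets by increasing key: the swap that lowers the key of F_j
   yields an earlier facet meeting F_j in a codimension-one face. *)
Lemma shellable_of_swaps K (key : {set V} -> nat) : pure K ->
  (forall Fi Fj, Fi \in facets K -> Fj \in facets K -> Fi != Fj -> key Fi <= key Fj ->
    exists a b, [/\ a \in Fj, a \notin Fi, b \notin Fj,
                    b |: Fj :\ a \in facets K & key (b |: Fj :\ a) < key Fj]) ->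
  shellable K.
Proof.
move=> pureK swap; split=> //.
set s := sort (relpre key leq) (enum (facets K)).
have mem_s F : (F \in s) = (F \in facets K) by rewrite mem_sort mem_enum.
have uniq_s : uniq s by rewrite sort_uniq enum_uniq.
have key_mono i j : j < size s -> i <= j -> key (nth set0 s i) <= key (nth set0 s j).
  have sorted_s : sorted (relpre key leq) s by apply: sort_sorted => F G; apply: leq_total.
  have key_trans : transitive (relpre key leq) by move=> G F H; apply: leq_trans.
  move=> js ij; apply: (sorted_leq_nth key_trans _ set0 sorted_s) => //.
    by move=> F; apply: leqnn.
  by rewrite inE (leq_ltn_trans ij).
exists s; split=> // i j ij js; have lt_is := ltn_trans ij js.
have Fi : nth set0 s i \in facets K by rewrite -mem_s mem_nth.
have Fj : nth set0 s j \in facets K by rewrite -mem_s mem_nth.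
have Fij : nth set0 s i != nth set0 s j by rewrite nth_uniq // ltn_eqF.
have [a [b [aFj aFi bFj Fl keyl]]] := swap _ _ Fi Fj Fij (key_mono i j js (ltnW ij)).
have ls : index (b |: nth set0 s j :\ a) s < size s by rewrite index_mem mem_s.
exists (index (b |: nth set0 s j :\ a) s); split.
  rewrite ltnNge; apply: contraL keyl => /(key_mono _ _ ls).
  by rewrite nth_index ?mem_s // -leqNgt.
exists a; rewrite nth_index ?mem_s // setU1_setD1_I //; split=> //; split=> //.
apply/subsetP => p; rewrite !inE => /andP[pi ->]; rewrite andbT.
by apply: contraTneq pi => ->.
Qed.

End Shelling.

Section CompleteSource.
Variable T : finType.
Variable e : rel T.
Hypothesis e_sym : symmetric e.
Variable A : {set T}.
Hypothesis A_source : complete_source e A.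
Implicit Types (F : {set T * T}).

Lemma source_strongly_indep : strongly_indep e A.
Proof. by case/and3P: A_source. Qed.

Lemma source_common_nbr u v w : u \in A -> v \in A -> e u w -> e v w -> u = v.
Proof.
case/andP: source_strongly_indep => _ /forall_inP disj uA vA euw evw.
apply/eqP; apply: contraT => uv; have := forall_inP (disj u uA) v vA; rewrite uv /=.
have wu : w \in nbhd e u by rewrite inE.
by move/disjointFr/(_ wu); rewrite inE evw.
Qed.

Definition center v := odflt v [pick x in A | (x == v) || e x v].

Lemma center_spec v : center v \in A /\ (center v == v) || e (center v) v.
Proof.
rewrite /center; case: pickP => [x /andP[xA xv] // | noc].
case/and3P: A_source => _ _ /eqP/setP/(_ v); rewrite !inE => /orP[vA|/bigcupP[x xA]].
  by move: (noc v); rewrite vA eqxx.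
by rewrite inE => exv; move: (noc x); rewrite xA exv orbT.
Qed.

(* Distinct vertices of a strongly independent set have distinct centers. *)
Lemma strongly_indep_card_le B : strongly_indep e B -> #|B| <= #|A|.
Proof.
case/andP=> /forall_inP indep /forall_inP disj.
have center_inj : {in B &, injective center}.
  move=> b1 b2 b1B b2B c12; apply/eqP; apply: contraT => b12.
  have [_ c1] := center_spec b1; have [_] := center_spec b2.
  rewrite -c12; move: c1; set x := center b1.
  have nb12 := forall_inP (indep b1 b1B) b2 b2B.
  have := forall_inP (disj b1 b1B) b2 b2B; rewrite b12 /= => /disjointFr dj.
  move=> /orP[/eqP x1|ex1] /orP[/eqP x2|ex2].
  - by move: b12; rewrite -x1 -x2 eqxx.
  - by move: nb12; rewrite -x1 ex2.
  - by move: nb12; rewrite e_sym -x2 ex1.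
  - by move: (dj x); rewrite !inE ![e _ x]e_sym ex1 ex2 => /(_ isT).
rewrite -(card_in_imset center_inj); apply: subset_leq_card.
by apply/subsetP => _ /imsetP[b _ ->]; case: (center_spec b).
Qed.

Lemma rG_source : rG e = #|A|.
Proof.
apply/eqP; rewrite eqn_leq; apply/andP; split.
  by apply/bigmax_leqP => B; apply: strongly_indep_card_le.
exact: (leq_bigmax_cond (F := fun B : {set T} => #|B|)) source_strongly_indep.
Qed.

Definition source_arcs : {set T * T} := [set p | (p.1 \in A) && e p.1 p.2].

Lemma source_arcs_indeg : indeg_le1 source_arcs.
Proof.
move=> x x' y; rewrite !inE => /andP[xA exy] /andP[x'A ex'y].
exact: source_common_nbr xA x'A exy ex'y.
Qed.

(* A forest with more than #|A| roots has two roots z1 != z2 with the same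
   center x; they cannot both lie below x, and one that does not can be hung
   from x. *)
Lemma forest_extend F : directed_forest e F -> #|F| < #|T| - #|A| ->
  exists b, [/\ b \in source_arcs, b.2 \in roots F & directed_forest e (b |: F)].
Proof.
move=> HF small; have F1 := directed_forest_indeg HF.
have many_roots : #|A| < #|roots F|.
  by have := card_roots F1; have := subset_leq_card (subsetT A); rewrite cardsT; lia.
have : ~~ [forall z1 in roots F, forall z2 in roots F, (center z1 == center z2) ==> (z1 == z2)].
  apply: contraL many_roots => /forall_inP inj; rewrite -leqNgt.
  have center_inj : {in roots F &, injective center}.
    move=> z1 z2 z1r z2r c12; apply/eqP.
    by move/forall_inP: (inj z1 z1r) => /(_ z2 z2r); rewrite c12 eqxx.
  rewrite -(card_in_imset center_inj); apply: subset_leq_card.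
  by apply/subsetP => _ /imsetP[z _ ->]; case: (center_spec z).
case/forall_inPn => z1 z1r /forall_inPn[z2 z2r]; rewrite negb_imply => /andP[/eqP c12 z12].
have [xA _] := center_spec z1; set x := center z1 in c12 xA.
have hang z : z \in roots F -> center z = x -> ~~ connect (arc_rel F) z x ->
    exists b, [/\ b \in source_arcs, b.2 \in roots F & directed_forest e (b |: F)].
  move=> zr cz nczx; have [_] := center_spec z; rewrite cz => /orP[/eqP xz|exz].
    by move: nczx; rewrite xz connect0.
  by exists (x, z); rewrite inE xA exz; split=> //; apply: directed_forest_setU1.
case c1 : (connect (arc_rel F) z1 x); last exact: hang z1 z1r erefl (negbT c1).
case c2 : (connect (arc_rel F) z2 x); last exact: hang z2 z2r (esym c12) (negbT c2).
by move: z12; rewrite (roots_connect_eq F1 z1r z2r c1 c2) eqxx.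
Qed.

Local Notation K := (skeleton (mG e) (dtree_complex e)).

Lemma mem_skeleton F : (F \in K) = directed_forest e F && (#|F| <= #|T| - #|A|).
Proof.
rewrite !inE /mG rG_source; congr andb; have := subset_leq_card (subsetT A); rewrite cardsT.
by move=> AT; apply/idP/idP; lia.
Qed.

Lemma mem_facets F : (F \in facets K) = directed_forest e F && (#|F| == #|T| - #|A|).
Proof.
rewrite inE mem_skeleton; apply/idP/idP.
  case/andP=> /andP[HF small] /forall_inP max; rewrite HF eqn_leq small leqNgt /=.
  apply/negP => lt; have [b [_ br HbF]] := forest_extend HF lt.
  have bF := root_notin br.
  have := max (b |: F); rewrite mem_skeleton HbF cardsU1 bF add1n lt subsetUr.
  move=> /(_ isT)/eqP bFF.
  by move: bF; rewrite -bFF setU11.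
case/andP=> HF /eqP full; rewrite HF full leqnn /=.
apply/forall_inP => G; rewrite mem_skeleton => /andP[_ small]; apply/implyP => sFG.
by rewrite eq_sym eqEcard sFG full.
Qed.

Lemma pure_skeleton : pure K.
Proof. by move=> F G; rewrite !mem_facets => /andP[_ /eqP->] /andP[_ /eqP->]. Qed.

Lemma facet_swap F a b : F \in facets K -> a \in F -> b \notin F ->
  directed_forest e (b |: F :\ a) -> b |: F :\ a \in facets K.
Proof.
rewrite !mem_facets => /andP[_ /eqP full] aF bF ->.
by rewrite -full cardsU1 in_setD1 (negbTE bF) andbF (cardsD1 a F) aF eqxx.
Qed.

Local Notation S := source_arcs.

Definition off_source F := #|F :\: S|.
Definition source_gap_weight F := bin_weight (S :\: F).
Definition shelling_key F := off_source F * 2 ^ #|{: T * T}| + source_gap_weight F.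

Lemma shelling_key_ltl F G : off_source F < off_source G -> shelling_key F < shelling_key G.
Proof.
rewrite /shelling_key; have := bin_weight_lt_card (S :\: F).
rewrite /source_gap_weight; move: (bin_weight _) (bin_weight _) (2 ^ _) => wF wG M.
by nia.
Qed.

Lemma shelling_key_ltr F G : off_source F = off_source G ->
  source_gap_weight F < source_gap_weight G -> shelling_key F < shelling_key G.
Proof. by rewrite /shelling_key => ->; rewrite ltn_add2l. Qed.

Lemma shelling_key_le F G : shelling_key F <= shelling_key G -> off_source G <= off_source F ->
  off_source F = off_source G /\ source_gap_weight F <= source_gap_weight G.
Proof.
rewrite /shelling_key; have := bin_weight_lt_card (S :\: G).
rewrite /source_gap_weight; move: (bin_weight _) (bin_weight _) (2 ^ _) => wG wF M.
by nia.
Qed.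

Lemma off_source_swap F a b : a \in S -> b \in S -> off_source (b |: F :\ a) = off_source F.
Proof.
move=> aS bS; rewrite /off_source; rewrite (_ : _ :\: S = F :\: S) //; apply/setP => p.
rewrite !(in_setD1, in_setD, in_setU1).
have [->|_] := eqVneq p b; first by rewrite bS.
by have [->|] := eqVneq p a; rewrite ?aS.
Qed.

Lemma source_gap_swap F a b : a \in S -> a \in F -> b \notin F -> a != b ->
  S :\: (b |: F :\ a) = a |: (S :\: F) :\ b.
Proof.
move=> aS aF bF ab; apply/setP => p; rewrite !(in_setD1, in_setD, in_setU1, in_set1).
have [->|_] := eqVneq p b; first by rewrite eq_sym (negbTE ab).
by have [->|] := eqVneq p a; rewrite ?aS.
Qed.

Lemma swap_off_source F a : F \in facets K -> a \in F -> a \notin S ->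
  exists b, [/\ b \notin F, b |: F :\ a \in facets K
               & shelling_key (b |: F :\ a) < shelling_key F].
Proof.
move=> FK aF aS; have := FK; rewrite mem_facets => /andP[HF /eqP full].
have HFa := directed_forest_subset (subsetDl F [set a]) HF.
have small : #|F :\ a| < #|T| - #|A| by rewrite -full (cardsD1 a F) aF.
have [b [bS br HbFa]] := forest_extend HFa small.
have bF : b \notin F.
  move: (root_notin br); rewrite in_setD1 negb_and negbK => /orP[/eqP ba|//].
  by move: aS; rewrite -ba bS.
exists b; split=> //; first exact: facet_swap.
apply: shelling_key_ltl; rewrite /off_source (_ : _ :\: S = (F :\: S) :\ a).
  by rewrite [ltnRHS](cardsD1 a) in_setD aS aF.
apply/setP => p; rewrite !(in_setD1, in_setD, in_setU1).
by case: eqVneq => [->|_] /=; rewrite ?bS ?andbF // andbCA.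
Qed.

(* The largest arc b = (x, l) of S that Fi has and Fj lacks makes l a root of
   Fj; as Fi is acyclic, l does not reach x in Fi, so some arc a of Fj outside
   Fi cuts l off from x in Fj, and b may replace a. *)
Lemma swap_source Fi Fj : Fi \in facets K -> Fj \in facets K -> Fi != Fj ->
  Fi :\: S = Fj :\: S -> source_gap_weight Fi <= source_gap_weight Fj ->
  exists a b, [/\ a \in Fj, a \notin Fi, b \notin Fj, b |: Fj :\ a \in facets K
                & shelling_key (b |: Fj :\ a) < shelling_key Fj].
Proof.
move=> FiK FjK Fij same_off le_gap.
have := FiK; rewrite mem_facets => /andP[HFi /eqP full_i].
have := FjK; rewrite mem_facets => /andP[HFj /eqP full_j].
have gaps : S :\: Fi != S :\: Fj.
  apply: contraNneq Fij => gap; apply/eqP/setP => p; have [pS|pS] := boolP (p \in S).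
    by move/setP/(_ p): gap; rewrite !in_setD pS !andbT => /negb_inj.
  by move/setP/(_ p): same_off; rewrite !in_setD pS.
have [[x l] gap_b max_b] := bin_weight_dominant gaps le_gap.
move: gap_b; rewrite !in_setD negb_and negbK => /and3P[+ bFj bS]; rewrite bS orbF => bFi.
have lroot : l \in roots Fj.
  rewrite inE; apply/forallP => y; apply/negP => ylFj.
  have [ylS|ylS] := boolP ((y, l) \in S).
    by move: bFj; rewrite -(source_arcs_indeg ylS bS) ylFj.
  have ylFi : (y, l) \in Fi.
    by move/setP/(_ (y, l)): same_off; rewrite !in_setD ylS ylFj => /andP[].
  by move: ylS; rewrite (directed_forest_indeg HFi ylFi bFi) bS.
have [a aFjFi cut] : exists2 a, a \in Fj :\: Fi & ~~ connect (arc_rel (Fj :\ a)) l x.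
  apply/exists_inP; apply: contraT; rewrite negb_exists_in => /forall_inP uncut.
  apply: contraR (directed_forest_acyclic HFi bFi) => _ /=.
  apply: connect_avoid (directed_forest_indeg HFj) _ _ => [|a /uncut/negPn//].
  by apply: contra Fij => sFjFi; rewrite eq_sym eqEcard sFjFi full_i full_j /=.
move: aFjFi; rewrite in_setD => /andP[aFi aFj].
have aS : a \in S.
  by apply: contraT => aS; move/setP/(_ a): same_off; rewrite !in_setD aS aFj (negbTE aFi).
have lt_ab : enum_rank a < enum_rank (x, l) by apply: max_b; rewrite !in_setD aS aFi aFj.
have ab : a != (x, l) by apply: contraTneq lt_ab => ->; rewrite ltnn.
have HFl : directed_forest e ((x, l) |: Fj :\ a).
  apply: directed_forest_setU1 cut.
  - exact: directed_forest_subset (subsetDl _ _) HFj.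
  - exact: directed_forest_arc HFi bFi.
  - exact: subsetP (rootsS (subsetDl _ _)) _ lroot.
exists a, (x, l); split=> //; first exact: facet_swap.
apply: shelling_key_ltr; first exact: off_source_swap.
rewrite /source_gap_weight source_gap_swap //.
by apply: bin_weight_swap; rewrite // !in_setD ?aFj ?bFj ?bS.
Qed.

Lemma shelling_key_swap Fi Fj : Fi \in facets K -> Fj \in facets K -> Fi != Fj ->
  shelling_key Fi <= shelling_key Fj ->
  exists a b, [/\ a \in Fj, a \notin Fi, b \notin Fj, b |: Fj :\ a \in facets K
                & shelling_key (b |: Fj :\ a) < shelling_key Fj].
Proof.
move=> FiK FjK Fij le_key.
have [sub|/subsetPn[a]] := boolP (Fj :\: S \subset Fi :\: S); last first.
  rewrite !in_setD => /andP[aS aFj]; rewrite aS /= => aFi.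
  by have [b [bFj FlK lt_key]] := swap_off_source FjK aFj aS; exists a, b.
have [same_off le_gap] := shelling_key_le le_key (subset_leq_card sub).
apply: swap_source => //; apply/eqP; rewrite eq_sym eqEcard sub.
by rewrite -/(off_source Fi) -/(off_source Fj) same_off leqnn.
Qed.

End CompleteSource.

Theorem mainTheorem6 (T : finType) (e : rel T) :
  simple_graph e ->
  (exists A : {set T}, complete_source e A) ->
  shellable (skeleton (mG e) (dtree_complex e)).
Proof.
case=> e_sym _ [A A_source].
exact: shellable_of_swaps (pure_skeleton e_sym A_source) (shelling_key_swap e_sym A_source).
Qed.
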